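(* Let $G$ be a maximal twelve tone subgroup of $S_{11}$ of signature $(n_1,\dots,n_d)$ with or without crossings, acting on $\mathcal{T}_7$. Then the multiset of sizes of the $G$-orbits of $\mathcal{T}_7$ is the multiset $$\left\{\binom{n_1}{k_1}\binom{n_2}{k_2}\cdots\binom{n_d}{k_d} : k_1,\dots,k_d\in\mathbb{Z}_{\ge 0},\ k_1+\cdots+k_d=6,\ k_i\le n_i \text{ for all } i\right\}$$ (one orbit for each such tuple $(k_1,\dots,k_d)$). Consequently, for all real $t\neq 0$, $$\mathrm{orb}_t(G,\mathcal{T}_7)=\left(\frac{1}{462}\sum \left(\binom{n_1}{k_1}\cdots\binom{n_d}{k_d}\right)^{t+1}\right)^{1/t},$$ the maximal $G$-orbits of $\mathcal{T}_7$ have size $\mathrm{orb}_\infty(G,\mathcal{T}_7)=\max \binom{n_1}{k_1}\cdots\binom{n_d}{k_d}$, and $\mathrm{diam}_t(G,\mathcal{T}_7)=\mathrm{orb}_\infty(G,\mathcal{T}_7)/\mathrm{orb}_t(G,\mathcal{T}_7)$; moreover $462=\binom{11}{6}=\sum \binom{n_1}{k_1}\cdots\binom{n_d}{k_d}$, and the number of $G$-orbits of $\mathcal{T}_7$ equals the number of such tuples $(k_1,\dots,k_d)$. Here all sums and the maximum range over tuples $(k_1,\dots,k_d)$ of nonnegative integers with $k_1+\cdots+k_d=6$ and $k_i\le n_i$ for all $i$.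
   Context: Let $\mathbb{Z}_{12}=\{0,\dots,11\}$ and let $\mathcal{T}_7$ be the set of $7$-element subsets of $\mathbb{Z}_{12}$ containing $0$ ($|\mathcal{T}_7|=462$). $S_{11}$ is the group of permutations of $\{1,\dots,11\}$, extended by $\sigma(0)=0$, acting on $\mathcal{T}_7$ by $\sigma\cdot s=\{\sigma(x):x\in s\}$. For positive integers $n_1+\cdots+n_d=11$, $S_{n_1,\dots,n_d}$ denotes the image of $S_{n_1}\times\cdots\times S_{n_d}\to S_{11}$ where the $i$-th factor permutes the consecutive block $\{n_1+\cdots+n_{i-1}+1,\dots,n_1+\cdots+n_i\}$; a maximal twelve tone group of signature $(n_1,\dots,n_d)$ with or without crossings is any conjugate $\tau S_{n_1,\dots,n_d}\tau^{-1}$, $\tau\in S_{11}$. For a group acting on a finite set $S$: $\mathrm{orb}_t(G,S)=\left(\frac{1}{|S|}\sum_{s\in S}|Gs|^t\right)^{1/t}$ for real $t\ne0$, $\mathrm{orb}_\infty(G,S)=\max_s|Gs|$, and $\mathrm{diam}_t(G,S)=\mathrm{orb}_\infty(G,S)/\mathrm{orb}_t(G,S)$. *)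

From HB Require Import structures.
From mathcomp Require Import all_boot all_order all_algebra all_fingroup.
From mathcomp Require Import reals exp.
Unset Strict Implicit. Unset Printing Implicit Defensive.
Import Order.TTheory GRing.Theory Num.Theory.

(* Z_12 = 'I_12 (as a set of points; only the set structure matters). *)
Definition Z12 := 'I_12.

(* S_11 : permutations of Z_12 fixing 0 (i.e. permutations of {1,..,11}). *)
Definition S11 : {set {perm Z12}} := [set s : {perm Z12} | s ord0 == ord0].

Definition T7 : {set {set Z12}} :=
  [set A : {set Z12} | (ord0 \in A) && (#|A| == 7)].

(* i-th consecutive block {n_1+..+n_{i-1}+1, ..., n_1+..+n_i} (i 0-based) *)
Definition block (n : seq nat) (i : nat) : {set Z12} :=
  [set x : Z12 | (sumn (take i n) < x) && (x <= sumn (take i.+1 n))].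

(* S_{n_1,...,n_d}: image of S_{n_1} x ... x S_{n_d} in S_11, i.e. the
   permutations fixing 0 that map each block onto itself. *)
Definition young (n : seq nat) : {set {perm Z12}} :=
  [set s : {perm Z12} | (s ord0 == ord0) &&
     [forall i : 'I_(size n), s @: block n i == block n i]].

Definition twelve_tone (n : seq nat) (tau : {perm Z12}) : {set {perm Z12}} :=
  [set (tau * s * tau^-1)%g | s in young n].

Definition signature (n : seq nat) : bool := all (fun m => 0 < m) n && (sumn n == 11).

Definition orbit_of (G : {set {perm Z12}}) (A : {set Z12}) : {set {set Z12}} :=
  [set (fun x : Z12 => (s : {perm Z12}) x) @: A | s in G].

Definition orbits_of (G : {set {perm Z12}}) (S : {set {set Z12}}) :=
  [set orbit_of G A | A in S].

Local Open Scope ring_scope.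

Definition orb_t {R : realType} (G : {set {perm Z12}}) (S : {set {set Z12}}) (t : R) : R :=
  powR ((#|S|%:R)^-1 * \sum_(A in S) powR (#|orbit_of G A|%:R) t) t^-1.

Definition orb_inf (G : {set {perm Z12}}) (S : {set {set Z12}}) : nat :=
  (\max_(A in S) #|orbit_of G A|)%N.

Definition diam_t {R : realType} (G : {set {perm Z12}}) (S : {set {set Z12}}) (t : R) : R :=
  (orb_inf G S)%:R / orb_t G S t.

(* tuples (k_1,...,k_d) of nonnegative integers with sum 6 and k_i <= n_i;
   the bound 'I_7 is harmless since the sum is 6. *)
Definition ktuples (n : seq nat) : {set {ffun 'I_(size n) -> 'I_7}} :=
  [set k : {ffun 'I_(size n) -> 'I_7} |
     ((\sum_i (k i : nat))%N == 6%N) && [forall i, ((k i : nat) <= nth 0%N n i)%N]].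

Definition binprod (n : seq nat) (k : {ffun 'I_(size n) -> 'I_7}) : nat :=
  (\prod_(i < size n) 'C(nth 0%N n i, k i))%N.

From mathcomp Require Import all_boot all_algebra all_fingroup.
From mathcomp Require Import reals exp zify.
Set Implicit Arguments. Unset Strict Implicit.
Import GRing.Theory Num.Theory.

(* The Young group Y = S_(n_1,...,n_d) fixes 0 and stabilises every block, so it preserves the
   profile (|A :&: block_1|, ..., |A :&: block_d|) of A in T_7.  Conversely two sets with the same
   profile are joined by a product of transpositions, each swapping a point of A :\: B with a
   point of B :\: A lying in the same block; hence the Y-orbits are exactly the profile fibres.
   The profiles of sets in T_7 are the admissible tuples k, and a set of profile k amounts to an
   independent choice of k_i points in each block, so the fibre of k has prod_i 'C(n_i, k_i)
   elements.  Conjugation by tau moves orbits by tau^-1, and every statistic of the theorem is a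
   sum or a maximum over the fibres. *)

Lemma card_ord_interval N a b : a <= b < N -> #|[set x : 'I_N | a < x <= b]| = b - a.
Proof.
case/andP=> ab bN.
rewrite -sum1_card (eq_bigl (fun x : 'I_N => a < x <= b)) => [|x]; last by rewrite inE.
rewrite -(big_mkord (fun x => a < x <= b) (fun=> 1)) sum1_count /index_iota subn0.
rewrite (_ : N = a.+1 + (b - a + (N - b.+1))); last by lia.
rewrite !iotaD add0n (_ : a.+1 + (b - a) = b.+1); last by lia.
rewrite !count_cat (@eq_in_count _ _ pred0) => [|x]; last by rewrite mem_iota /=; lia.
rewrite (@eq_in_count _ _ predT (iota a.+1 _)) => [|x]; last by rewrite mem_iota /=; lia.
rewrite (@eq_in_count _ _ pred0 (iota b.+1 _)) => [|x]; last by rewrite mem_iota /=; lia.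
by rewrite !count_pred0 count_predT size_iota add0n addn0.
Qed.

Lemma sumn_take_leq (s : seq nat) i j : i <= j -> sumn (take i s) <= sumn (take j s).
Proof. by move=> ij; rewrite -(subnKC ij) takeD sumn_cat leq_addr. Qed.

Lemma sumn_take_leq_sumn (s : seq nat) i : sumn (take i s) <= sumn s.
Proof. by rewrite -{2}(cat_take_drop i s) sumn_cat leq_addr. Qed.

Lemma sumn_takeS (s : seq nat) i : i < size s -> sumn (take i.+1 s) = sumn (take i s) + nth 0 s i.
Proof. by move=> lt_i_s; rewrite (take_nth 0 lt_i_s) sumn_rcons. Qed.

Lemma sumn_take_bracket (s : seq nat) x : 0 < x <= sumn s ->
  exists2 i, i < size s & sumn (take i s) < x <= sumn (take i.+1 s).
Proof.
elim: s x => [|a s IHs] x /=; first by lia.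
move=> x_in; case: (leqP x a) => [le_xa | lt_ax]; first by exists 0 => //=; rewrite take0; lia.
have [|i lt_i_s x_in_i] := IHs (x - a); first by lia.
by exists i.+1 => //=; lia.
Qed.

Lemma card_bigcup_disjoint (I T : finType) (F : I -> {set T}) :
  (forall i j, i != j -> [disjoint F i & F j]) -> #|\bigcup_i F i| = \sum_i #|F i|.
Proof.
move=> disjF; rewrite -sum1_card (partition_disjoint_bigcup _ _ disjF).
by apply: eq_bigr => i _; rewrite sum1_card.
Qed.

Lemma perm_enum_imset (T T' : finType) (f : T -> T') (A : {set T}) :
  {in A &, injective f} -> perm_eq (enum (f @: A)) (map f (enum A)).
Proof.
move=> injf; apply: uniq_perm; first exact: enum_uniq.
  by rewrite map_inj_in_uniq ?enum_uniq // => x y; rewrite !mem_enum; apply: injf.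
move=> y; rewrite mem_enum; apply/imsetP/mapP => -[x]; rewrite ?mem_enum => xA ->.
  by exists x; rewrite ?mem_enum.
by exists x.
Qed.

Lemma imset_perm1 (T : finType) (A : {set T}) : (1 : {perm T})%g @: A = A.
Proof. by rewrite -[RHS]imset_id; apply: eq_imset => x; rewrite perm1. Qed.

Lemma imset_permM (T : finType) (s t : {perm T}) (A : {set T}) : (s * t)%g @: A = t @: (s @: A).
Proof. by rewrite -imset_comp; apply: eq_imset => x; rewrite permM. Qed.

Lemma card_perm_setI_stable (T : finType) (s : {perm T}) (A B : {set T}) :
  s @: B = B -> #|s @: A :&: B| = #|A :&: B|.
Proof.
move=> sB; rewrite -{1}sB -imsetI ?card_imset //; first exact: perm_inj.
by apply: in2W; apply: perm_inj.
Qed.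

Lemma tperm_imset_stable (T : finType) (x y : T) (B : {set T}) :
  (x \in B) = (y \in B) -> tperm x y @: B = B.
Proof.
move=> xyB; apply/eqP; rewrite eqEcard card_imset ?leqnn ?andbT; last exact: perm_inj.
apply/subsetP => _ /imsetP[z zB ->].
by case: tpermP => [zx|zy|//]; [rewrite -xyB -zx | rewrite xyB -zy].
Qed.

Lemma card_setI_exchange (T : finType) (A B C : {set T}) x :
  #|B :&: C| = #|A :&: C| -> x \in A :\: B -> x \in C -> exists2 y, y \in B :\: A & y \in C.
Proof.
move=> eq_card /setDP[xA xNB] xC; apply/exists_inP; move: xNB; apply: contraNT => /exists_inPn noy.
have sub_BC : B :&: C \subset A :&: C.
  apply/subsetP => y /setIP[yB yC]; rewrite inE yC andbT.
  by apply: contraLR yC => yNA; apply: noy; rewrite inE yB yNA.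
have [_] := subset_leqif_cards sub_BC; rewrite eq_card eqxx => /esym/eqP eq_BC.
by have /setIP[] : x \in B :&: C by rewrite eq_BC inE xA xC.
Qed.

Lemma tperm_imset_setD (T : finType) (A B : {set T}) x y :
  x \in A :\: B -> y \in B :\: A -> tperm x y @: A :\: B \subset (A :\: B) :\ x.
Proof.
move=> /setDP[xA xNB] /setDP[yB yNA]; apply/subsetP => _ /setDP[/imsetP[w wA ->]].
case: tpermP => [_|wy|/eqP wNx _] wNB; first by rewrite yB in wNB.
  by rewrite -wy wA in yNA.
by rewrite !inE wNx wNB wA.
Qed.

Lemma mem_imset_T7 (s : {perm Z12}) (A : {set Z12}) : s ord0 = ord0 -> (s @: A \in T7) = (A \in T7).
Proof.
by move=> s0; rewrite !inE -{1}s0 mem_imset ?card_imset //; apply: perm_inj.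
Qed.

Section Blocks.

Variable n : seq nat.
Hypothesis sumn_n : sumn n = 11.
Local Notation d := (size n).

Lemma block_uniq (x : Z12) i j : x \in block n i -> x \in block n j -> i = j.
Proof.
rewrite !inE => /andP[lt_i le_i] /andP[lt_j le_j].
by case: (ltngtP i j) => // [/sumn_take_leq | /sumn_take_leq] /(_ n); lia.
Qed.

Lemma ord0_notin_block i : ord0 \notin block n i.
Proof. by rewrite inE. Qed.

Lemma disjoint_blocks (i j : 'I_d) : i != j -> [disjoint block n i & block n j].
Proof.
move=> neq_ij; rewrite -setI_eq0; apply/set0Pn => -[x /setIP[xi xj]].
by move: neq_ij; rewrite -val_eqE /= (block_uniq xi xj) eqxx.
Qed.

Lemma bigcup_blocks : \bigcup_(i < d) block n i = [set~ ord0].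
Proof.
apply/setP => x; rewrite !inE; apply/bigcupP/idP => [[i _]|x_neq0].
  by apply: contraTneq => ->; apply: ord0_notin_block.
have [|i lt_i_d x_in] := @sumn_take_bracket n x.
  by rewrite sumn_n -[_ <= 11]ltnS ltn_ord andbT lt0n.
by exists (Ordinal lt_i_d) => //; rewrite inE.
Qed.

Lemma card_block (i : 'I_d) : #|block n i| = nth 0 n i.
Proof.
have le_S := sumn_take_leq_sumn n i.+1; rewrite sumn_n in le_S.
rewrite card_ord_interval; first by rewrite sumn_takeS // addKn.
by rewrite sumn_take_leq //= ltnS.
Qed.

Lemma setD0_bigcup (A : {set Z12}) : A :\ ord0 = \bigcup_(i < d) (A :&: block n i).
Proof.
apply/setP => x; rewrite setDE -bigcup_blocks inE; apply/andP/bigcupP.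
  by case=> xA /bigcupP[i _ xi]; exists i; rewrite // inE xA.
by case=> i _ /setIP[xA xi]; split; last by apply/bigcupP; exists i.
Qed.

Lemma card_setD0 (A : {set Z12}) : #|A :\ ord0| = \sum_(i < d) #|A :&: block n i|.
Proof.
rewrite setD0_bigcup card_bigcup_disjoint // => i j /disjoint_blocks.
exact/disjointW/subsetIr/subsetIr.
Qed.

Lemma card_setD0_T7 (A : {set Z12}) : A \in T7 -> #|A :\ ord0| = 6.
Proof. by rewrite inE => /andP[A0 /eqP cardA]; move: cardA; rewrite (cardsD1 ord0) A0 => -[]. Qed.

Lemma sum_card_blocks_T7 (A : {set Z12}) : A \in T7 -> \sum_(i < d) #|A :&: block n i| = 6.
Proof. by move=> A_T7; rewrite -card_setD0 card_setD0_T7. Qed.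

Lemma card_setI_block_leq (A : {set Z12}) (i : 'I_d) : #|A :&: block n i| <= #|A :\ ord0|.
Proof.
apply/subset_leq_card/subsetP => x /setIP[xA xi]; rewrite !inE xA andbT.
by apply: contraTneq xi => ->; apply: ord0_notin_block.
Qed.

Definition profile (A : {set Z12}) : {ffun 'I_d -> 'I_7} :=
  [ffun i : 'I_d => inord #|A :&: block n i|].

Lemma profileE (A : {set Z12}) (i : 'I_d) : A \in T7 -> profile A i = #|A :&: block n i| :> nat.
Proof.
by move=> A_T7; rewrite ffunE inordK // ltnS (leq_trans (card_setI_block_leq A i)) ?card_setD0_T7.
Qed.

Lemma profile_ktuple (A : {set Z12}) : A \in T7 -> profile A \in ktuples n.
Proof.
move=> A_T7; rewrite inE; apply/andP; split.
  by rewrite (eq_bigr _ (fun i _ => profileE i A_T7)) sum_card_blocks_T7.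
by apply/forallP => i; rewrite profileE // -card_block subset_leq_card ?subsetIr.
Qed.

Definition profile_fibre (k : {ffun 'I_d -> 'I_7}) := [set A in T7 | profile A == k].

Definition block_parts (A : {set Z12}) : {ffun 'I_d -> {set Z12}} :=
  [ffun i : 'I_d => A :&: block n i].

Definition block_draws (k : {ffun 'I_d -> 'I_7}) (i : 'I_d) :=
  [pred C : {set Z12} | (C \subset block n i) && (#|C| == k i)].

Lemma block_parts_inj : {in T7 &, injective block_parts}.
Proof.
move=> A B; rewrite !inE => /andP[A0 _] /andP[B0 _] eq_parts.
rewrite -(setD1K A0) -(setD1K B0) !setD0_bigcup; congr (_ |: _); apply: eq_bigr => i _.
by move/ffunP/(_ i): eq_parts; rewrite !ffunE.
Qed.

Lemma setU0_bigcup_block (f : 'I_d -> {set Z12}) (i : 'I_d) :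
  (forall j, f j \subset block n j) -> (ord0 |: \bigcup_j f j) :&: block n i = f i.
Proof.
move=> f_sub; apply/setP => z; rewrite in_setI in_setU1.
apply/andP/idP => [[/orP[/eqP-> | /bigcupP[j _ zj]] zi] | zi].
- by rewrite (negbTE (ord0_notin_block i)) in zi.
- by rewrite -(@val_inj _ _ _ j i (block_uniq (subsetP (f_sub j) z zj) zi)).
- by rewrite (subsetP (f_sub i) z zi); split=> //; apply/orP; right; apply/bigcupP; exists i.
Qed.

Lemma block_parts_fibre (k : {ffun 'I_d -> 'I_7}) : k \in ktuples n ->
  block_parts @: profile_fibre k = [set f in family (block_draws k)].
Proof.
rewrite inE => /andP[/eqP sum_k _]; apply/setP => f; rewrite inE; apply/imsetP/familyP.
  case=> A /setIdP[A_T7 /eqP <-] -> i.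
  by rewrite ffunE inE subsetIr profileE //=.
move=> f_draws; have f_sub j : f j \subset block n j by case/andP: (f_draws j).
have card_f j : #|f j| = k j by case/andP: (f_draws j) => _ /eqP.
pose A := ord0 |: \bigcup_j f j.
have parts_A (i : 'I_d) : A :&: block n i = f i by apply: setU0_bigcup_block.
have A_T7 : A \in T7.
  rewrite inE setU11 (cardsD1 ord0) setU11 card_setD0.
  by under eq_bigr => i _ do rewrite parts_A card_f; rewrite sum_k.
exists A; last by apply/ffunP => i; rewrite ffunE parts_A.
by rewrite inE A_T7; apply/eqP/ffunP => i; apply/val_inj; rewrite /= profileE // parts_A.
Qed.

Lemma card_profile_fibre (k : {ffun 'I_d -> 'I_7}) : k \in ktuples n ->
  #|profile_fibre k| = binprod n k.
Proof.
move=> k_ok; have inj : {in profile_fibre k &, injective block_parts}.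
  by apply: sub_in2 block_parts_inj => A /setIdP[].
rewrite -(card_in_imset inj) block_parts_fibre // cardsE card_family foldrE big_image /=.
apply: eq_bigr => i _; rewrite -card_block -cards_draws.
by apply: eq_card => C; rewrite !inE.
Qed.

Lemma youngP (s : {perm Z12}) :
  reflect (s ord0 = ord0 /\ forall i : 'I_d, s @: block n i = block n i) (s \in young n).
Proof.
rewrite inE; apply: (iffP andP) => [[/eqP s0 /forallP s_blocks] | [s0 s_blocks]].
  by split=> // i; apply/eqP.
by rewrite s0; split=> //; apply/forallP => i; rewrite s_blocks.
Qed.

Lemma young_group_set : group_set (young n).
Proof.
apply/group_setP; split.
  by apply/youngP; split=> [|i]; rewrite ?perm1 ?imset_perm1.
move=> s t /youngP[s0 s_blocks] /youngP[t0 t_blocks]; apply/youngP; split=> [|i].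
  by rewrite permM s0 t0.
by rewrite imset_permM s_blocks t_blocks.
Qed.

Canonical young_group := Group young_group_set.

Lemma tperm_young (i : 'I_d) (x y : Z12) :
  x \in block n i -> y \in block n i -> tperm x y \in young n.
Proof.
move=> xi yi; apply/youngP; split=> [|j].
  by apply: tpermD; [move: xi | move: yi]; apply: contraTneq => ->; apply: ord0_notin_block.
apply: tperm_imset_stable; case: (eqVneq i j) => [<-|neq_ij]; first by rewrite xi yi.
have /disjointFr disj := disjoint_blocks neq_ij; by rewrite !disj.
Qed.

Lemma profile_young (s : {perm Z12}) (A : {set Z12}) :
  s \in young n -> profile (s @: A) = profile A.
Proof.
by case/youngP=> _ s_blocks; apply/ffunP => i; rewrite !ffunE card_perm_setI_stable.
Qed.

Lemma young_transitive (A B : {set Z12}) : A \in T7 -> B \in T7 ->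
  profile A = profile B -> exists2 s, s \in young n & B = s @: A.
Proof.
have [N] := ubnP #|A :\: B|; elim: N A => // N IHN A lt_AB A_T7 B_T7 eq_profile.
have [AB0 | [x xAB]] := set_0Vmem (A :\: B).
  exists 1%g; first exact: group1.
  move/eqP: AB0; rewrite setD_eq0 => sub_AB.
  rewrite imset_perm1; apply/esym/eqP; rewrite eqEcard sub_AB.
  by move: A_T7 B_T7; rewrite !inE => /andP[_ /eqP->] /andP[_ /eqP->].
have x_neq0 : x != ord0.
  by apply: contraTneq xAB => ->; rewrite inE negb_and negbK; move: B_T7; rewrite inE => /andP[->].
have /bigcupP[i _ xi] : x \in \bigcup_(i < d) block n i by rewrite bigcup_blocks !inE.
have eq_card : #|B :&: block n i| = #|A :&: block n i|.
  by rewrite -!profileE // eq_profile.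
have [y yBA yi] := card_setI_exchange eq_card xAB xi.
have t_young := tperm_young xi yi.
have [s s_young ->] : exists2 s, s \in young n & B = s @: (tperm x y @: A).
  apply: IHN => //; last by rewrite profile_young.
    rewrite -ltnS (leq_trans _ lt_AB) // (cardsD1 x (A :\: B)) xAB add1n ltnS.
    exact/subset_leq_card/tperm_imset_setD.
  rewrite mem_imset_T7 // tpermD //.
  apply: contraTneq yi => ->; apply: ord0_notin_block.
by exists (tperm x y * s)%g; rewrite ?groupM ?imset_permM.
Qed.

Lemma orbit_young (A : {set Z12}) : A \in T7 -> orbit_of (young n) A = profile_fibre (profile A).
Proof.
move=> A_T7; apply/setP => B; rewrite inE.
apply/imsetP/andP => [[s s_young ->] | [B_T7 /eqP eq_AB]].
  by case/youngP: (s_young) => s0 _; rewrite mem_imset_T7 // profile_young.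
by have [s s_young ->] := young_transitive A_T7 B_T7 (esym eq_AB); exists s.
Qed.

End Blocks.

Lemma orbit_of_conj (H : {set {perm Z12}}) (tau : {perm Z12}) (A : {set Z12}) :
  orbit_of [set (tau * s * tau^-1)%g | s in H] A =
  [set (tau^-1)%g @: B | B : {set Z12} in orbit_of H (tau @: A)].
Proof. by rewrite /orbit_of -!imset_comp; apply: eq_imset => s /=; rewrite !imset_permM. Qed.

Section Conjugation.

Variables (n : seq nat) (tau : {perm Z12}).
Hypothesis tau0 : tau ord0 = ord0.

Lemma profile_conj_fibre (k : {ffun 'I_(size n) -> 'I_7}) :
  [set B in T7 | profile n (tau @: B) == k] =
  [set (tau^-1)%g @: B | B : {set Z12} in profile_fibre k].
Proof.
have tauV0 : (tau^-1)%g ord0 = ord0 by rewrite -{1}tau0 permK.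
apply/setP => B; rewrite inE; apply/andP/imsetP => [[B_T7 prof_B] | [C /setIdP[C_T7 prof_C] ->]].
  exists (tau @: B); first by rewrite in_set mem_imset_T7 ?B_T7.
  by rewrite -imset_permM mulgV imset_perm1.
by rewrite mem_imset_T7 // -imset_permM mulVg imset_perm1.
Qed.

Lemma orbit_twelve_tone (A : {set Z12}) : sumn n = 11 -> A \in T7 ->
  orbit_of (twelve_tone n tau) A = [set B in T7 | profile n (tau @: B) == profile n (tau @: A)].
Proof.
by move=> sumn_n A_T7; rewrite orbit_of_conj orbit_young ?mem_imset_T7 // profile_conj_fibre.
Qed.

Lemma card_profile_conj_fibre (k : {ffun 'I_(size n) -> 'I_7}) : sumn n = 11 -> k \in ktuples n ->
  #|[set B in T7 | profile n (tau @: B) == k]| = binprod n k.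
Proof.
move=> sumn_n k_ok; rewrite profile_conj_fibre card_imset ?card_profile_fibre //.
exact/imset_inj/perm_inj.
Qed.

End Conjugation.

Section OrbitStatistics.

Variables (G : {set {perm Z12}}) (S : {set {set Z12}}).
Variables (K : finType) (P : {set K}) (kappa : {set Z12} -> K) (c : K -> nat).

Let fibre k := [set A in S | kappa A == k].

Hypothesis orbit_fibre : {in S, forall A, orbit_of G A = fibre (kappa A)}.
Hypothesis kappa_P : {in S, forall A, kappa A \in P}.
Hypothesis card_fibre : {in P, forall k, #|fibre k| = c k}.
Hypothesis c_gt0 : {in P, forall k, 0 < c k}.

Lemma fibre_witness k : k \in P -> exists2 A, A \in S & kappa A = k.
Proof.
move=> kP; have /card_gt0P[A /setIdP[AS /eqP kA]] : 0 < #|fibre k| by rewrite card_fibre ?c_gt0.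
by exists A.
Qed.

Lemma orbits_of_fibres : orbits_of G S = fibre @: P.
Proof.
apply/setP => O; apply/imsetP/imsetP => [[A AS ->] | [k kP ->]].
  by exists (kappa A); rewrite ?kappa_P ?orbit_fibre.
by have [A AS kA] := fibre_witness kP; exists A; rewrite ?orbit_fibre ?kA.
Qed.

Lemma fibre_inj : {in P &, injective fibre}.
Proof.
move=> k1 k2 k1P _ eq_fibre; have [A AS kA] := fibre_witness k1P.
have /setIdP[_ /eqP <- //] : A \in fibre k2 by rewrite -eq_fibre inE AS kA eqxx.
Qed.

Lemma card_orbits_of : #|orbits_of G S| = #|P|.
Proof. by rewrite orbits_of_fibres card_in_imset //; apply: fibre_inj. Qed.

Lemma perm_eq_orbit_sizes :
  perm_eq (map (fun O : {set {set Z12}} => #|O|) (enum (orbits_of G S))) [seq c k | k <- enum P].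
Proof.
rewrite orbits_of_fibres; apply: perm_trans (perm_map _ (perm_enum_imset fibre_inj)) _.
rewrite -map_comp.
suff -> : map ((fun O : {set {set Z12}} => #|O|) \o fibre) (enum P) = [seq c k | k <- enum P] by [].
by apply/eq_in_map => k; rewrite mem_enum; apply: card_fibre.
Qed.

Lemma sum_fibre_sizes : (\sum_(k in P) c k)%N = #|S|.
Proof.
rewrite -sum1_card (partition_big kappa [in P]) //=.
by apply: eq_bigr => k kP; rewrite -card_fibre // -sum1_card; apply: eq_bigl => A; rewrite inE.
Qed.

Lemma sum_orbit_sizes (V : nmodType) (F : nat -> V) :
  (\sum_(A in S) F #|orbit_of G A| = \sum_(k in P) F (c k) *+ c k)%R.
Proof.
rewrite (partition_big kappa [in P]) //=; apply: eq_bigr => k kP.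
rewrite (eq_bigr (fun=> F (c k))) => [|A /andP[AS /eqP kA]]; last first.
  by rewrite orbit_fibre // kA card_fibre.
by rewrite sumr_const -card_fibre //; congr (_ *+ _)%R; apply: eq_card => A; rewrite inE.
Qed.

Lemma orb_inf_fibres : orb_inf G S = (\max_(k in P) c k)%N.
Proof.
apply/eqP; rewrite eqn_leq; apply/andP; split; apply/bigmax_leqP.
  move=> A AS; rewrite orbit_fibre // card_fibre ?kappa_P //.
  exact/leq_bigmax_cond/kappa_P.
move=> k kP; have [A AS <-] := fibre_witness kP.
by rewrite -card_fibre ?kappa_P // -orbit_fibre //; apply: leq_bigmax_cond.
Qed.

End OrbitStatistics.

Lemma card_sets_containing (T : finType) (x : T) k :
  #|[set A : {set T} | (x \in A) && (#|A| == k.+1)]| = 'C(#|T|.-1, k).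
Proof.
rewrite -(cardsC1 x) -cards_draws -(@card_in_imset _ _ (fun A => A :\ x)) => [|A B]; last first.
  by rewrite !inE => /andP[xA _] /andP[xB _] eqAB; rewrite -(setD1K xA) eqAB setD1K.
apply: eq_card => D; apply/imsetP/idP => [[A /setIdP[xA /eqP cardA] ->] | ].
  rewrite !inE; apply/andP; split; first by apply/subsetP => y; rewrite !inE => /andP[].
  by move: cardA; rewrite (cardsD1 x A) xA add1n => -[->].
rewrite !inE => /andP[/subsetP D_sub /eqP cardD].
have xD : x \notin D by apply/negP => /D_sub; rewrite !inE eqxx.
by exists (x |: D); rewrite ?setU1K // inE setU11 cardsU1 xD cardD add1n eqxx.
Qed.

Lemma card_T7 : #|T7| = 'C(11, 6).
Proof. by rewrite card_sets_containing card_ord. Qed.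

Lemma binprod_gt0 n (k : {ffun 'I_(size n) -> 'I_7}) : k \in ktuples n -> 0 < binprod n k.
Proof.
by rewrite inE => /andP[_ /forallP k_le]; rewrite prodn_gt0 // => i; rewrite bin_gt0.
Qed.

Lemma powR_nat_mulrn (R : realType) (m : nat) (t : R) :
  0 < m -> (powR m%:R t *+ m = powR m%:R (t + 1))%R.
Proof.
move=> m_gt0; rewrite powRD ?powRr1 ?ler0n ?mulr_natr //.
by rewrite pnatr_eq0 -lt0n m_gt0 implybT.
Qed.

Unset Implicit Arguments.
Local Open Scope ring_scope.

Theorem proposition5p1 (R : realType) (n : seq nat) (tau : {perm Z12}) :
  signature n -> tau \in S11 ->
  let G := twelve_tone n tau in
  perm_eq (map (fun O : {set {set Z12}} => #|O|) (enum (orbits_of G T7)))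
          [seq binprod n k | k <- enum (ktuples n)]
  /\ (forall t : R, t != 0 ->
        orb_t G T7 t =
        powR ((462%:R)^-1 * \sum_(k in ktuples n) powR ((binprod n k)%:R) (t + 1)) t^-1)
  /\ orb_inf G T7 = (\max_(k in ktuples n) binprod n k)%N
  /\ (forall t : R, t != 0 ->
        diam_t G T7 t = (orb_inf G T7)%:R / orb_t G T7 t)
  /\ 'C(11, 6) = 462%N
  /\ (\sum_(k in ktuples n) binprod n k)%N = 462%N
  /\ #|orbits_of G T7| = #|ktuples n|.
Proof.
case/andP=> _ /eqP sumn_n; rewrite inE => /eqP tau0 G.
pose kappa (B : {set Z12}) := profile n (tau @: B).
have orbit_fibre : {in T7, forall A, orbit_of G A = [set B in T7 | kappa B == kappa A]}.
  by move=> A; apply: orbit_twelve_tone.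
have kappa_ktuple : {in T7, forall A, kappa A \in ktuples n}.
  by move=> A A_T7; apply: profile_ktuple; rewrite ?mem_imset_T7.
have card_fibre : {in ktuples n, forall k, #|[set B in T7 | kappa B == k]| = binprod n k}.
  by move=> k; apply: card_profile_conj_fibre.
have c_gt0 : {in ktuples n, forall k, 0 < binprod n k}%N by move=> k; apply: binprod_gt0.
have card_T7_462 : #|T7| = 462%N by rewrite card_T7.
split; first exact: perm_eq_orbit_sizes orbit_fibre kappa_ktuple card_fibre c_gt0.
split.
  move=> t _; rewrite /orb_t card_T7_462.
  rewrite (sum_orbit_sizes orbit_fibre kappa_ktuple card_fibre (fun m => powR m%:R t)).
  by congr (powR (_ * _) _); apply: eq_bigr => k /c_gt0; apply: powR_nat_mulrn.
split; first exact: orb_inf_fibres orbit_fibre kappa_ktuple card_fibre c_gt0.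
split; first by [].
split; first by [].
split; first by rewrite (sum_fibre_sizes kappa_ktuple card_fibre).
exact: card_orbits_of orbit_fibre kappa_ktuple card_fibre c_gt0.
Qed.
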